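(* Let $\mathscr{A}$ be a $C^*$-algebra, let $\delta,\varepsilon\in(0,1)$, let $\mathscr{E}$ and $\mathscr{F}$ be inner product $\mathscr{A}$-modules, and let $T:\mathscr{E}\to\mathscr{F}$ be a nonzero linear mapping such that for some real number $\gamma$ with $[T]\leq\gamma\leq\|T\|$, $$\sqrt{\tfrac{\delta}{\varepsilon}}\,\gamma^2\|\langle x,y\rangle\|\leq\|\langle Tx,Ty\rangle\|\leq\sqrt{\tfrac{\varepsilon}{\delta}}\,\gamma^2\|\langle x,y\rangle\|\qquad(x,y\in\mathscr{E}).$$ Then $T$ is a $(\delta,\varepsilon)$-orthogonality preserving mapping.
   Context: An inner product $\mathscr{A}$-module is a right $\mathscr{A}$-module $\mathscr{E}$ with an $\mathscr{A}$-valued inner product $\langle\cdot,\cdot\rangle$, $\mathbb{C}$-linear and $\mathscr{A}$-linear in the second variable, with $\langle x,y\rangle^*=\langle y,x\rangle$, $\langle x,x\rangle\geq0$ and $\langle x,x\rangle=0$ iff $x=0$; the norm is $\|x\|=\|\langle x,x\rangle\|^{1/2}$. The minimum modulus of a linear map $T$ is $[T]=\inf\{\|Tx\|:\|x\|=1\}$. A mapping $T:\mathscr{E}\to\mathscr{F}$ is $(\delta,\varepsilon)$-orthogonality preserving if for all $x,y\in\mathscr{E}$, $\|\langle x,y\rangle\|\leq\delta\|x\|\,\|y\|$ implies $\|\langle Tx,Ty\rangle\|\leq\varepsilon\|Tx\|\,\|Ty\|$. *)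

From HB Require Import structures.
From mathcomp Require Import all_boot all_order all_algebra.
From mathcomp Require Import complex.
From mathcomp Require Import all_classical all_reals ereal.
Set Implicit Arguments. Unset Strict Implicit. Unset Printing Implicit Defensive.
Import Order.TTheory GRing.Theory Num.Theory.
Local Open Scope ring_scope.

Definition cabs (R : realType) (c : R[i]) : R :=
  let: Complex a b := c in Num.sqrt (a ^+ 2 + b ^+ 2).
Definition cconj (R : realType) (c : R[i]) : R[i] :=
  let: Complex a b := c in Complex a (- b).

Section Defs.
Variables (R : realType) (A : lmodType R[i]).
Variables (mul : A -> A -> A) (star : A -> A) (nrm : A -> R).

Record is_cstar_algebra : Prop := {
  cs_mulA : forall a b c, mul a (mul b c) = mul (mul a b) c;
  cs_mulDl : forall a b c, mul (a + b) c = mul a c + mul b c;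
  cs_mulDr : forall a b c, mul a (b + c) = mul a b + mul a c;
  cs_mulZl : forall (l : R[i]) a b, mul (l *: a) b = l *: mul a b;
  cs_mulZr : forall (l : R[i]) a b, mul a (l *: b) = l *: mul a b;
  cs_starD : forall a b, star (a + b) = star a + star b;
  cs_starZ : forall (l : R[i]) a, star (l *: a) = cconj l *: star a;
  cs_starM : forall a b, star (mul a b) = mul (star b) (star a);
  cs_starK : forall a, star (star a) = a;
  cs_nrm_eq0 : forall a, nrm a = 0 -> a = 0;
  cs_nrmD : forall a b, nrm (a + b) <= nrm a + nrm b;
  cs_nrmZ : forall (l : R[i]) a, nrm (l *: a) = cabs l * nrm a;
  cs_nrmM : forall a b, nrm (mul a b) <= nrm a * nrm b;
  cs_cstar : forall a, nrm (mul (star a) a) = nrm a ^+ 2;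
  cs_complete : forall u : nat -> A,
    (forall e : R, 0 < e -> exists N : nat, forall m n : nat,
        (N <= m)%N -> (N <= n)%N -> nrm (u m - u n) < e) ->
    exists l : A, forall e : R, 0 < e -> exists N : nat, forall n : nat,
        (N <= n)%N -> nrm (u n - l) < e
}.

Definition cs_pos (a : A) : Prop := exists b, a = mul (star b) b.

Record is_ip_module (E : lmodType R[i]) (act : E -> A -> E) (ip : E -> E -> A)
  : Prop := {
  im_actM : forall x a b, act x (mul a b) = act (act x a) b;
  im_actDl : forall x y a, act (x + y) a = act x a + act y a;
  im_actDr : forall x a b, act x (a + b) = act x a + act x b;
  im_actZl : forall (l : R[i]) x a, act (l *: x) a = l *: act x a;
  im_actZr : forall (l : R[i]) x a, act x (l *: a) = l *: act x a;
  im_ipD : forall x y z, ip x (y + z) = ip x y + ip x z;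
  im_ipZ : forall (l : R[i]) x y, ip x (l *: y) = l *: ip x y;
  im_ipA : forall x y a, ip x (act y a) = mul (ip x y) a;
  im_ipstar : forall x y, star (ip x y) = ip y x;
  im_ip_pos : forall x, cs_pos (ip x x);
  im_ip_eq0 : forall x, ip x x = 0 -> x = 0
}.

Definition mnorm (E : lmodType R[i]) (ip : E -> E -> A) (x : E) : R :=
  Num.sqrt (nrm (ip x x)).

Definition op_norm (E F : lmodType R[i]) (ipE : E -> E -> A) (ipF : F -> F -> A)
  (T : E -> F) : \bar R :=
  ereal_sup [set ((mnorm ipF (T x))%:E) | x in [set x | mnorm ipE x = 1]]%classic.
Definition min_modulus (E F : lmodType R[i]) (ipE : E -> E -> A) (ipF : F -> F -> A)
  (T : E -> F) : \bar R :=
  ereal_inf [set ((mnorm ipF (T x))%:E) | x in [set x | mnorm ipE x = 1]]%classic.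

Definition de_orth_preserving (E F : lmodType R[i]) (ipE : E -> E -> A)
  (ipF : F -> F -> A) (T : E -> F) (delta eps : R) : Prop :=
  forall x y : E, nrm (ipE x y) <= delta * mnorm ipE x * mnorm ipE y ->
    nrm (ipF (T x) (T y)) <= eps * mnorm ipF (T x) * mnorm ipF (T y).
End Defs.

From HB Require Import structures.
From mathcomp Require Import all_boot all_order all_algebra.
From mathcomp Require Import complex.
From mathcomp Require Import all_classical all_reals ereal.
From mathcomp Require Import ring.
Import Order.TTheory GRing.Theory Num.Theory.
Local Open Scope ring_scope.

(* If ||<Tx,Ty>|| <= b ||<x,y>|| and a ||<z,z>|| <= ||<Tz,Tz>||, then
   ||Tx|| >= sqrt a ||x||, so a small ||<x,y>|| <= delta ||x|| ||y|| gives
   ||<Tx,Ty>|| <= b delta ||x|| ||y|| <= eps ||Tx|| ||Ty|| once b delta <= eps a.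
   For the corollary a = sqrt(delta/eps) gamma^2 and b = sqrt(eps/delta) gamma^2,
   and b delta = eps a because sqrt(eps/delta) delta = sqrt(eps delta)
   = eps sqrt(delta/eps). *)

Lemma sqrt_div_mulr (R : rcfType) (d e : R) : 0 < d -> 0 < e ->
  Num.sqrt (e / d) * d = e * Num.sqrt (d / e).
Proof.
move=> d0 e0; apply/eqP; rewrite -(eqrXn2 (n := 2)) //.
- rewrite !exprMn !sqr_sqrtr ?divr_ge0 ?ltW //.
  by apply/eqP; field; rewrite ?gt_eqF.
- by rewrite mulr_ge0 ?sqrtr_ge0 ?ltW.
- by rewrite mulr_ge0 ?sqrtr_ge0 ?ltW.
Qed.

Section OrthogonalityFromBounds.
Variables (R : realType) (A : lmodType R[i]) (nrm : A -> R).
Variables (E F : lmodType R[i]) (ipE : E -> E -> A) (ipF : F -> F -> A).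
Variable T : E -> F.

Lemma mnorm_ge_of_ip_lower_bound (a : R) : 0 <= a ->
  (forall z, a * nrm (ipE z z) <= nrm (ipF (T z) (T z))) ->
  forall z, Num.sqrt a * mnorm nrm ipE z <= mnorm nrm ipF (T z).
Proof. by move=> a0 lowT z; rewrite /mnorm -sqrtrM // ler_wsqrtr. Qed.

Lemma de_orth_preserving_of_ip_bounds (a b delta eps : R) :
  0 <= a -> 0 <= b -> 0 <= eps -> b * delta <= eps * a ->
  (forall z, a * nrm (ipE z z) <= nrm (ipF (T z) (T z))) ->
  (forall x y, nrm (ipF (T x) (T y)) <= b * nrm (ipE x y)) ->
  de_orth_preserving nrm ipE ipF T delta eps.
Proof.
move=> a0 b0 eps0 bdea lowT upT x y orth_xy.
set u := mnorm nrm ipE x; set v := mnorm nrm ipE y.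
have u0 : 0 <= u by apply: sqrtr_ge0.
have v0 : 0 <= v by apply: sqrtr_ge0.
have sa0 : 0 <= Num.sqrt a by apply: sqrtr_ge0.
have Tx_ge := mnorm_ge_of_ip_lower_bound a a0 lowT x.
have Ty_ge := mnorm_ge_of_ip_lower_bound a a0 lowT y.
have uv_ge : a * (u * v) <= mnorm nrm ipF (T x) * mnorm nrm ipF (T y).
  have -> : a * (u * v) = (Num.sqrt a * u) * (Num.sqrt a * v).
    by rewrite mulrACA -expr2 sqr_sqrtr.
  by apply: ler_pM; rewrite ?mulr_ge0.
apply: (le_trans (upT x y)).
apply: (@le_trans _ _ (b * (delta * u * v))); first exact: ler_wpM2l.
apply: (@le_trans _ _ (eps * (a * (u * v)))).
  have -> : b * (delta * u * v) = b * delta * (u * v) by rewrite !mulrA.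
  by rewrite [X in _ <= X]mulrA; apply: ler_wpM2r; rewrite ?mulr_ge0.
by rewrite -mulrA; apply: ler_wpM2l.
Qed.

End OrthogonalityFromBounds.

Theorem corollary2p2 (R : realType) (A : lmodType R[i])
  (mul : A -> A -> A) (star : A -> A) (nrm : A -> R)
  (hA : is_cstar_algebra mul star nrm)
  (delta eps : R) (hd : 0 < delta < 1) (he : 0 < eps < 1)
  (E F : lmodType R[i])
  (actE : E -> A -> E) (ipE : E -> E -> A) (hE : is_ip_module mul star actE ipE)
  (actF : F -> A -> F) (ipF : F -> F -> A) (hF : is_ip_module mul star actF ipF)
  (T : {linear E -> F}) (hT : exists x : E, T x <> 0)
  (gamma : R)
  (hg1 : (min_modulus nrm ipE ipF T <= gamma%:E)%E)
  (hg2 : (gamma%:E <= op_norm nrm ipE ipF T)%E)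
  (hineq : forall x y : E,
     Num.sqrt (delta / eps) * gamma ^+ 2 * nrm (ipE x y) <= nrm (ipF (T x) (T y))
     /\ nrm (ipF (T x) (T y)) <= Num.sqrt (eps / delta) * gamma ^+ 2 * nrm (ipE x y)) :
  de_orth_preserving nrm ipE ipF T delta eps.
Proof.
case/andP: hd => delta0 _; case/andP: he => eps0 _.
apply: (@de_orth_preserving_of_ip_bounds _ _ _ _ _ _ _ T
  (Num.sqrt (delta / eps) * gamma ^+ 2) (Num.sqrt (eps / delta) * gamma ^+ 2)).
- by rewrite mulr_ge0 ?sqrtr_ge0 ?sqr_ge0.
- by rewrite mulr_ge0 ?sqrtr_ge0 ?sqr_ge0.
- exact: ltW.
- by rewrite mulrAC sqrt_div_mulr // -mulrA lexx.
- by move=> z; case: (hineq z z).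
- by move=> x y; case: (hineq x y).
Qed.
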